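(* Let $G$ and $G'$ act on simply connected scwols $\mathcal X$ and $\mathcal X'$ with quotients $\mathcal Y=G\backslash\mathcal X$ and $\mathcal Y'=G'\backslash\mathcal X'$, let $L:\mathcal X\to\mathcal X'$ be a morphism of scwols equivariant with respect to a homomorphism $\Lambda:G\to G'$, with induced morphism $l:\mathcal Y\to\mathcal Y'$, and let $\lambda=\lambda_{C_\bullet,C'_\bullet,N_\bullet}:G(\mathcal Y)_{C_\bullet}\to G'(\mathcal Y')_{C'_\bullet}$ be the induced morphism for some choices $C_\bullet$, $C'_\bullet$, $N_\bullet$. Then $\lambda$ is a covering of complexes of groups if and only if $\Lambda$ is injective and $L$ is an isomorphism of scwols.
   Context: Scwols. A scwol $\mathcal X$ consists of a set $V(\mathcal X)$ of vertices, a set $E(\mathcal X)$ of edges, maps $i,t:E(\mathcal X)\to V(\mathcal X)$, and a composition $(a,b)\mapsto ab\in E(\mathcal X)$ defined on $E^{(2)}(\mathcal X)=\{(a,b): i(a)=t(b)\}$, such that $i(ab)=i(b)$, $t(ab)=t(a)$, $(ab)c=a(bc)$ whenever defined, and $i(a)\neq t(a)$ for all $a$. $\mathcal X$ is connected (resp. simply connected) if its geometric realization (one $k$-simplex for each sequence of $k$ composable edges) is. A morphism of scwols $l$ sends vertices to vertices and edges to edges and commutes with $i$, $t$ and composition; it is nondegenerate if for every vertex $\sigma$ it maps the edges with initial vertex $\sigma$ bijectively onto the edges with initial vertex $l(\sigma)$; an isomorphism is an invertible morphism. An action of a group $G$ on $\mathcal X$ is a homomorphism from $G$ to the automorphism group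 of $\mathcal X$ such that $g\cdot i(a)\neq t(a)$ for all $g,a$, and $g\cdot i(a)=i(a)$ implies $g\cdot a=a$. The quotient scwol $G\backslash\mathcal X$ has as vertices and edges the $G$-orbits with induced structure; a $\Lambda$-equivariant morphism $L$ ($L(g\alpha)=\Lambda(g)L(\alpha)$) induces a morphism $l$ of quotients. Complexes of groups. A complex of groups $G(\mathcal Y)=(G_\sigma,\psi_a,g_{a,b})$ over $\mathcal Y$ consists of groups $G_\sigma$, injective homomorphisms $\psi_a:G_{i(a)}\to G_{t(a)}$ and elements $g_{a,b}\in G_{t(a)}$ with $\mathrm{Ad}(g_{a,b})\psi_{ab}=\psi_a\psi_b$ and $\psi_a(g_{b,c})g_{a,bc}=g_{a,b}g_{ab,c}$. A morphism $\phi=(\phi_\sigma,\phi(a)):G(\mathcal Y)\to G'(\mathcal Y')$ over $l$ consists of homomorphisms $\phi_\sigma:G_\sigma\to G'_{l(\sigma)}$ and elements $\phi(a)\in G'_{t(l(a))}$ with $\mathrm{Ad}(\phi(a))\psi'_{l(a)}\phi_{i(a)}=\phi_{t(a)}\psi_a$ and $\phi_{t(a)}(g_{a,b})\phi(ab)=\phi(a)\psi'_{l(a)}(\phi(b))g'_{l(a),l(b)}$. A morphism $\phi$ over a nondegenerate $l$ with $\mathcal Y'$ connected is a covering if every $\phi_\sigma$ is injective and for every $a'\in E(\mathcal Y')$ and $\sigma\in V(\mathcal Y)$ with $t(a')=l(\sigma)$ the map $\coprod_{a\in l^{-1}(a'),\,t(a)=\sigma}G_\sigma/\psi_a(G_{i(a)})\to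 G'_{l(\sigma)}/\psi'_{a'}(G'_{i(a')})$ induced by $g\mapsto\phi_\sigma(g)\phi(a)$ is bijective. Associated complex of groups and induced morphism. If $G$ acts on $\mathcal X$ with quotient $\mathcal Y$, a choice $C_\bullet$ consists of a lift $\bar\sigma\in V(\mathcal X)$ of each $\sigma\in V(\mathcal Y)$ and, for each $a\in E(\mathcal Y)$, with $\bar a$ the unique lift of $a$ with $i(\bar a)=\overline{i(a)}$, an element $h_a\in G$ with $h_a\cdot t(\bar a)=\overline{t(a)}$. Then $G(\mathcal Y)_{C_\bullet}$ has $G_\sigma=\mathrm{Stab}_G(\bar\sigma)$, $\psi_a(g)=h_agh_a^{-1}$, $g_{a,b}=h_ah_bh_{ab}^{-1}$. Similarly $C'_\bullet=(\overline{\sigma'},h'_{a'})$ for $G'$ on $\mathcal X'$. A choice $N_\bullet=(k_\sigma)_{\sigma\in V(\mathcal Y)}$ consists of $k_\sigma\in G'$ with $k_\sigma\cdot L(\bar\sigma)=\overline{l(\sigma)}$; the induced morphism $\lambda_{C_\bullet,C'_\bullet,N_\bullet}$ over $l$ is $\lambda_\sigma(g)=k_\sigma\Lambda(g)k_\sigma^{-1}$, $\lambda(a)=k_{t(a)}\Lambda(h_a)k_{i(a)}^{-1}h'^{-1}_{l(a)}$. *)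

From Stdlib Require Import List Relations.
Import ListNotations.
Set Implicit Arguments.

Record Grp := {
  gcar :> Type;
  gmul : gcar -> gcar -> gcar;
  gone : gcar;
  ginv : gcar -> gcar;
  gmulA : forall x y z, gmul x (gmul y z) = gmul (gmul x y) z;
  gmul1 : forall x, gmul gone x = x;
  gmulr1 : forall x, gmul x gone = x;
  gmulV : forall x, gmul (ginv x) x = gone;
  gmulrV : forall x, gmul x (ginv x) = gone
}.
Arguments gmul {g}.
Arguments gone {g}.
Arguments ginv {g}.

Definition group_hom {G G' : Grp} (f : G -> G') : Prop :=
  forall x y, f (gmul x y) = gmul (f x) (f y).

Definition injective_map {A B : Type} (f : A -> B) : Prop :=
  forall x y, f x = f y -> x = y.

(** * Scwols.  Composition is given as a total function [comp] whose
    values are only meaningful on composable pairs (i a = t b). *)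
Record scwol := {
  sV : Type;
  sE : Type;
  si : sE -> sV;
  st : sE -> sV;
  comp : sE -> sE -> sE;
  comp_i : forall a b, si a = st b -> si (comp a b) = si b;
  comp_t : forall a b, si a = st b -> st (comp a b) = st a;
  comp_assoc : forall a b c, si a = st b -> si b = st c ->
      comp (comp a b) c = comp a (comp b c);
  no_loop : forall a, si a <> st a
}.

Definition is_morphism {X X' : scwol} (fV : sV X -> sV X') (fE : sE X -> sE X')
  : Prop :=
  (forall a, si X' (fE a) = fV (si X a)) /\
  (forall a, st X' (fE a) = fV (st X a)) /\
  (forall a b, si X a = st X b -> fE (comp X a b) = comp X' (fE a) (fE b)).

Definition nondegenerate {X X' : scwol} (fV : sV X -> sV X') (fE : sE X -> sE X')
  : Prop :=
  forall s : sV X,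
    (forall a b, si X a = s -> si X b = s -> fE a = fE b -> a = b) /\
    (forall a', si X' a' = fV s -> exists a, si X a = s /\ fE a = a').

Definition is_isomorphism {X X' : scwol} (fV : sV X -> sV X') (fE : sE X -> sE X')
  : Prop :=
  is_morphism fV fE /\
  exists (gV : sV X' -> sV X) (gE : sE X' -> sE X),
    is_morphism gV gE /\
    (forall v, gV (fV v) = v) /\ (forall v', fV (gV v') = v') /\
    (forall a, gE (fE a) = a) /\ (forall a', fE (gE a') = a').

(** * Connectedness and simple connectedness (combinatorial, via edge paths
      of the geometric realization). *)

Definition step_src (X : scwol) (s : sE X * bool) : sV X :=
  if snd s then si X (fst s) else st X (fst s).
Definition step_tgt (X : scwol) (s : sE X * bool) : sV X :=
  if snd s then st X (fst s) else si X (fst s).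

Fixpoint edge_path (X : scwol) (v w : sV X) (p : list (sE X * bool)) : Prop :=
  match p with
  | [] => v = w
  | s :: q => step_src X s = v /\ edge_path X (step_tgt X s) w q
  end.

(* elementary homotopies: cancelling a backtrack, and replacing two
   composable edges (b then a, i a = t b) by their composite ab
   (i.e. moving across a 2-simplex of the realization) *)
Inductive elem_htpy (X : scwol) : list (sE X * bool) -> list (sE X * bool) -> Prop :=
  | eh_back : forall p q a d,
      elem_htpy X (p ++ (a, d) :: (a, negb d) :: q) (p ++ q)
  | eh_comp : forall p q a b, si X a = st X b ->
      elem_htpy X (p ++ (b, true) :: (a, true) :: q) (p ++ (comp X a b, true) :: q).

Definition path_htpy (X : scwol) (v w : sV X) : relation (list (sE X * bool)) :=
  clos_refl_sym_trans _
    (fun p q => edge_path X v w p /\ edge_path X v w q /\ elem_htpy X p q).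

Definition connected (X : scwol) : Prop :=
  inhabited (sV X) /\ forall v w : sV X, exists p, edge_path X v w p.

Definition simply_connected (X : scwol) : Prop :=
  connected X /\
  forall (v : sV X) p, edge_path X v v p -> path_htpy X v v p [].

Record action (G : Grp) (X : scwol) := {
  actV : G -> sV X -> sV X;
  actE : G -> sE X -> sE X;
  actV1 : forall v, actV gone v = v;
  actE1 : forall a, actE gone a = a;
  actVM : forall g h v, actV (gmul g h) v = actV g (actV h v);
  actEM : forall g h a, actE (gmul g h) a = actE g (actE h a);
  act_morph : forall g, is_morphism (actV g) (actE g);
  act_no_inv : forall g a, actV g (si X a) <> st X a;
  act_stab : forall g a, actV g (si X a) = si X a -> actE g a = a
}.
Arguments actV {G X}.
Arguments actE {G X}.

(** This determines i, t and composition of Y. *)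
Definition is_quotient {G : Grp} {X : scwol} (A : action G X) {Y : scwol}
  (pV : sV X -> sV Y) (pE : sE X -> sE Y) : Prop :=
  is_morphism pV pE /\
  (forall y, exists x, pV x = y) /\ (forall e, exists a, pE a = e) /\
  (forall x x', pV x = pV x' <-> exists g, actV A g x = x') /\
  (forall a a', pE a = pE a' <-> exists g, actE A g a = a').

(** * Choices and the associated complex of groups G(Y)_C.
    All local groups of G(Y)_C are subgroups of G, so G(Y)_C is represented
    inside the ambient group G. *)
Record choiceC (G : Grp) (X : scwol) (A : action G X) (Y : scwol)
  (pV : sV X -> sV Y) (pE : sE X -> sE Y) := {
  cbarV : sV Y -> sV X;
  cbarE : sE Y -> sE X;
  ch : sE Y -> G;
  cbarV_lift : forall s, pV (cbarV s) = s;
  cbarE_lift : forall a, pE (cbarE a) = a;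
  cbarE_i : forall a, si X (cbarE a) = cbarV (si Y a);
  ch_t : forall a, actV A (ch a) (st X (cbarE a)) = cbarV (st Y a)
}.
Arguments choiceC {G X} A {Y} pV pE.
Arguments cbarV {G X A Y pV pE}.
Arguments cbarE {G X A Y pV pE}.
Arguments ch {G X A Y pV pE}.

Definition locC {G X A Y pV pE} (C : @choiceC G X A Y pV pE) (s : sV Y) (g : G) : Prop :=
  actV A g (cbarV C s) = cbarV C s.

Definition psiC {G X A Y pV pE} (C : @choiceC G X A Y pV pE) (a : sE Y) (g : G) : G :=
  gmul (gmul (ch C a) g) (ginv (ch C a)).

Definition choiceN {G X A Y pV pE} (C : @choiceC G X A Y pV pE)
  {G' X'} {A' : action G' X'} {Y' pV' pE'} (C' : @choiceC G' X' A' Y' pV' pE')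
  (LV : sV X -> sV X') (lV : sV Y -> sV Y') (k : sV Y -> G') : Prop :=
  forall s, actV A' (k s) (LV (cbarV C s)) = cbarV C' (lV s).

Definition lambdaV {G G' : Grp} (Lam : G -> G') {Y : scwol} (k : sV Y -> G') (s : sV Y) (g : G)
  : G' := gmul (gmul (k s) (Lam g)) (ginv (k s)).

Definition lambdaE {G X A Y pV pE} (C : @choiceC G X A Y pV pE)
  {G' X'} {A' : action G' X'} {Y' pV' pE'} (C' : @choiceC G' X' A' Y' pV' pE')
  (Lam : G -> G') (lE : sE Y -> sE Y') (k : sV Y -> G') (a : sE Y) : G' :=
  gmul (gmul (gmul (k (st Y a)) (Lam (ch C a))) (ginv (k (si Y a))))
       (ginv (ch C' (lE a))).

(** * Coverings of complexes of groups, for complexes whose local groups are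
    given as subgroups [loc sigma] of ambient groups G, G' (with twisting
    maps psi, psi'), and a morphism (phiV, phiE) over l = (lV, lE).
    Cosets are left cosets g psi_a(G_{i(a)}); two cosets x H, y H coincide
    iff x h = y for some h in H. *)
Definition is_covering {Y Y' : scwol} (lV : sV Y -> sV Y') (lE : sE Y -> sE Y')
  {G G' : Grp}
  (loc : sV Y -> G -> Prop) (psi : sE Y -> G -> G)
  (loc' : sV Y' -> G' -> Prop) (psi' : sE Y' -> G' -> G')
  (phiV : sV Y -> G -> G') (phiE : sE Y -> G') : Prop :=
  nondegenerate lV lE /\ connected Y' /\
  (forall s g1 g2, loc s g1 -> loc s g2 -> phiV s g1 = phiV s g2 -> g1 = g2) /\
  (forall (a' : sE Y') (s : sV Y), st Y' a' = lV s ->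
    (* injectivity of  coprod_{a in l^-1(a'), t(a)=s} G_s/psi_a(G_{i a})
         -> G'_{l s}/psi'_{a'}(G'_{i a'}),  [g] |-> [phi_s(g) phi(a)] *)
    (forall a1 a2 g1 g2,
        lE a1 = a' -> lE a2 = a' -> st Y a1 = s -> st Y a2 = s ->
        loc s g1 -> loc s g2 ->
        (exists h', loc' (si Y' a') h' /\
           gmul (gmul (phiV s g1) (phiE a1)) (psi' a' h')
           = gmul (phiV s g2) (phiE a2)) ->
        a1 = a2 /\ exists h, loc (si Y a1) h /\ gmul g1 (psi a1 h) = g2) /\
    (forall g', loc' (lV s) g' ->
        exists a g h', lE a = a' /\ st Y a = s /\ loc s g /\ loc' (si Y' a') h' /\
          gmul (gmul (phiV s g) (phiE a)) (psi' a' h') = g')).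

From Stdlib Require Import List ClassicalEpsilon.
Import ListNotations.
Set Implicit Arguments.
Unset Strict Implicit.

(* Edges of X ending at the chosen lift σ̄ correspond bijectively to pairs of
   an edge a of Y with t(a) = σ and a coset in G_σ/ψ_a(G_{i(a)}), and λ is
   precisely what L does to such pairs.  Hence λ is a covering iff L is
   bijective on the edges leaving each vertex (nondegeneracy of l), bijective
   on the edges entering each vertex, and Λ is injective on vertex stabilisers.
   A morphism of scwols bijective on all stars has unique path lifting and
   lifts homotopies, so from a connected onto a simply connected scwol it is an
   isomorphism; conversely an isomorphism is bijective on stars, and once L is
   injective, injectivity of Λ on one stabiliser forces injectivity of Λ. *)

Section GroupTheory.
Context {G : Grp}.
Implicit Types x y z : G.

Lemma mulKg x y : gmul (ginv x) (gmul x y) = y.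
Proof. rewrite gmulA, gmulV, gmul1; reflexivity. Qed.

Lemma mulVKg x y : gmul x (gmul (ginv x) y) = y.
Proof. rewrite gmulA, gmulrV, gmul1; reflexivity. Qed.

Lemma mulg_cancel_l x y z : gmul x y = gmul x z -> y = z.
Proof. intro H. rewrite <- (mulKg x y), <- (mulKg x z), H; reflexivity. Qed.

Lemma mulg_cancel_r x y z : gmul y x = gmul z x -> y = z.
Proof.
  intro H. rewrite <- (gmulr1 _ y), <- (gmulr1 _ z), <- (gmulrV _ x), !gmulA, H.
  reflexivity.
Qed.

Lemma ginv_unique x y : gmul x y = gone -> ginv x = y.
Proof. intro H. apply mulg_cancel_l with (x := x). rewrite gmulrV; auto. Qed.

Lemma ginvM x y : ginv (gmul x y) = gmul (ginv y) (ginv x).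
Proof. apply ginv_unique. rewrite <- gmulA, mulVKg, gmulrV; reflexivity. Qed.

Lemma ginvK x : ginv (ginv x) = x.
Proof. apply ginv_unique, gmulV. Qed.

Lemma ginv1 : ginv (@gone G) = gone.
Proof. apply ginv_unique, gmul1. Qed.

End GroupTheory.

Ltac group_simpl := repeat progress (rewrite ?ginvM, ?ginvK, ?ginv1, <- ?gmulA,
  ?mulKg, ?mulVKg, ?gmulV, ?gmulrV, ?gmul1, ?gmulr1).

Section GroupHom.
Variables (G G' : Grp) (f : G -> G').
Hypothesis hf : group_hom f.

Lemma hom_one : f gone = gone.
Proof.
  apply mulg_cancel_l with (x := f gone). rewrite <- hf, gmul1, gmulr1. reflexivity.
Qed.

Lemma hom_inv x : f (ginv x) = ginv (f x).
Proof. symmetry. apply ginv_unique. rewrite <- hf, gmulrV. apply hom_one. Qed.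

End GroupHom.

(* The star of [v] in direction [d]: the edges [a] whose step [(a, d)] starts
   at [v], i.e. edges issuing from [v] if [d = true], ending at [v] if not. *)
Definition star_injective {X X' : scwol} (d : bool) (fE : sE X -> sE X')
  (v : sV X) : Prop :=
  forall a b, step_src X (a, d) = v -> step_src X (b, d) = v -> fE a = fE b -> a = b.

Definition star_surjective {X X' : scwol} (d : bool) (fV : sV X -> sV X')
  (fE : sE X -> sE X') (v : sV X) : Prop :=
  forall a', step_src X' (a', d) = fV v -> exists a, step_src X (a, d) = v /\ fE a = a'.

Definition star_bijective {X X' : scwol} (d : bool) (fV : sV X -> sV X')
  (fE : sE X -> sE X') (v : sV X) : Prop :=
  star_injective d fE v /\ star_surjective d fV fE v.

Definition locally_bijective {X X' : scwol} (fV : sV X -> sV X')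
  (fE : sE X -> sE X') : Prop :=
  forall d v, star_bijective d fV fE v.

Lemma step_src_map {X X' : scwol} {fV : sV X -> sV X'} {fE : sE X -> sE X'}
  (hf : is_morphism fV fE) a d : step_src X' (fE a, d) = fV (step_src X (a, d)).
Proof. destruct hf as [hi [ht _]]; destruct d; apply hi || apply ht. Qed.

Lemma step_tgt_map {X X' : scwol} {fV : sV X -> sV X'} {fE : sE X -> sE X'}
  (hf : is_morphism fV fE) a d : step_tgt X' (fE a, d) = fV (step_tgt X (a, d)).
Proof. destruct hf as [hi [ht _]]; destruct d; apply hi || apply ht. Qed.

Section Morphisms.
Context {X X' : scwol}.
Variables (fV : sV X -> sV X') (fE : sE X -> sE X').
Hypothesis hf : is_morphism fV fE.

Definition map_steps (p : list (sE X * bool)) : list (sE X' * bool) :=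
  map (fun s => (fE (fst s), snd s)) p.

Lemma edge_path_map p : forall v w,
  edge_path X v w p -> edge_path X' (fV v) (fV w) (map_steps p).
Proof.
  induction p as [|[a d] p IH]; cbn; intros v w H.
  - subst; reflexivity.
  - destruct H as [Hs Hp]. rewrite (step_src_map hf), (step_tgt_map hf), Hs. auto.
Qed.

Lemma bijective_morphism_isomorphism :
  injective_map fV -> (forall v', exists v, fV v = v') ->
  injective_map fE -> (forall a', exists a, fE a = a') ->
  is_isomorphism fV fE.
Proof.
  intros injV surV injE surE.
  destruct (choice _ surV) as [gV gV1]; destruct (choice _ surE) as [gE gE1].
  split; [exact hf|]. exists gV, gE.
  destruct hf as [hi [ht hc]].
  repeat split.
  - intro a'. apply injV. rewrite <- hi, gE1, gV1. reflexivity.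
  - intro a'. apply injV. rewrite <- ht, gE1, gV1. reflexivity.
  - intros a' b' E.
    assert (Hab : si X (gE a') = st X (gE b')).
    { apply injV. rewrite <- hi, <- ht, !gE1. exact E. }
    apply injE. rewrite hc, !gE1 by exact Hab. reflexivity.
  - intro v. apply injV. rewrite gV1. reflexivity.
  - exact gV1.
  - intro a. apply injE. rewrite gE1. reflexivity.
  - exact gE1.
Qed.

Lemma isomorphism_locally_bijective : is_isomorphism fV fE -> locally_bijective fV fE.
Proof.
  intros [_ [gV [gE [hg [gV1 [_ [gE1 gE2]]]]]]] d v. split.
  - intros a b _ _ E. rewrite <- (gE1 a), <- (gE1 b), E. reflexivity.
  - intros a' Ha'. exists (gE a'). split; [|exact (gE2 a')].
    rewrite <- (gV1 v), <- Ha', (step_src_map hg). reflexivity.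
Qed.

Lemma isomorphism_vertex_injective : is_isomorphism fV fE -> injective_map fV.
Proof.
  intros [_ [gV [_ [_ [gV1 _]]]]] v w E. rewrite <- (gV1 v), <- (gV1 w), E.
  reflexivity.
Qed.

End Morphisms.

Section PathLifting.
Context {X X' : scwol}.
Variables (fV : sV X -> sV X') (fE : sE X -> sE X').
Hypotheses (hf : is_morphism fV fE) (hloc : locally_bijective fV fE).

Definition lifts_to (v : sV X) (p' : list (sE X' * bool)) (w : sV X) : Prop :=
  exists p, edge_path X v w p /\ map_steps fE p = p'.

Lemma lifts_to_nil v w : lifts_to v [] w <-> v = w.
Proof.
  split.
  - intros [[|s p] [Hp Hm]]; [exact Hp | discriminate].
  - intros ->. exists []. split; reflexivity.
Qed.

Lemma lifts_to_cons v a' d q' w :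
  lifts_to v ((a', d) :: q') w <->
  exists a, step_src X (a, d) = v /\ fE a = a' /\ lifts_to (step_tgt X (a, d)) q' w.
Proof.
  split.
  - intros [[|[a e] p] [Hp Hm]]; [discriminate|].
    injection Hm as <- <- Hm. destruct Hp as [Hs Hp].
    exists a. repeat split; auto. exists p; auto.
  - intros [a [Hs [<- [p [Hp <-]]]]]. exists ((a, d) :: p). split; [split|]; auto.
Qed.

Lemma lifts_to_app p' : forall q' v w,
  lifts_to v (p' ++ q') w <-> exists u, lifts_to v p' u /\ lifts_to u q' w.
Proof.
  induction p' as [|[a' d] p' IH]; intros q' v w; cbn.
  - split.
    + intro H. exists v. split; auto. apply lifts_to_nil. reflexivity.
    + intros [u [Hu H]]. apply lifts_to_nil in Hu. subst. exact H.
  - rewrite lifts_to_cons. split.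
    + intros [a [Hs [Ha H]]]. apply IH in H as [u [H1 H2]].
      exists u. split; auto. apply lifts_to_cons. eauto.
    + intros [u [H1 H2]]. apply lifts_to_cons in H1 as [a [Hs [Ha H1]]].
      exists a. repeat split; auto. apply IH. eauto.
Qed.

Lemma lift_exists p' : forall v w',
  edge_path X' (fV v) w' p' -> exists w, lifts_to v p' w /\ fV w = w'.
Proof.
  induction p' as [|[a' d] q' IH]; cbn; intros v w' H.
  - exists v. split; auto. apply lifts_to_nil. reflexivity.
  - destruct H as [Hs H].
    destruct (proj2 (hloc d v) a' Hs) as [a [Ha <-]].
    rewrite (step_tgt_map hf) in H.
    destruct (IH _ _ H) as [w [Hw <-]].
    exists w. split; auto. apply lifts_to_cons. eauto.
Qed.

Lemma lift_unique p' : forall v w1 w2, lifts_to v p' w1 -> lifts_to v p' w2 -> w1 = w2.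
Proof.
  induction p' as [|[a' d] q' IH]; intros v w1 w2 H1 H2.
  - apply lifts_to_nil in H1, H2. congruence.
  - apply lifts_to_cons in H1 as [a1 [S1 [E1 H1]]].
    apply lifts_to_cons in H2 as [a2 [S2 [E2 H2]]].
    assert (a1 = a2) by (apply (proj1 (hloc d v)); congruence).
    subst a2. eauto.
Qed.

Lemma lifts_to_elem_htpy p' q' v w :
  elem_htpy X' p' q' -> lifts_to v p' w -> lifts_to v q' w.
Proof.
  intros [P Q a' d | P Q a' b' _]; rewrite !lifts_to_app;
    intros [u [HP HQ]]; exists u; split; auto;
    apply lifts_to_cons in HQ as [a1 [S1 [E1 HQ]]];
    apply lifts_to_cons in HQ as [a2 [S2 [E2 HQ]]].
  - assert (Hback : step_src X (a1, negb d) = step_tgt X (a1, d))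
      by (destruct d; reflexivity).
    assert (a2 = a1).
    { apply (proj1 (hloc (negb d) _)) with (1 := S2) (2 := Hback). congruence. }
    subst a2.
    assert (Htgt : step_tgt X (a1, negb d) = u) by (destruct d; exact S1).
    rewrite Htgt in HQ. exact HQ.
  - cbn in S1, S2, HQ.
    apply lifts_to_cons. exists (comp X a2 a1). cbn.
    destruct hf as [_ [_ hc]].
    rewrite comp_i, comp_t, hc, E1, E2 by exact S2. auto.
Qed.

Lemma lifts_to_htpy v' w' p' q' : path_htpy X' v' w' p' q' ->
  forall v w, fV v = v' -> (lifts_to v p' w <-> lifts_to v q' w).
Proof.
  induction 1 as [p' q' [Hp [Hq He]] | p' | p' q' _ IH | p' q' r' _ IH1 _ IH2];
    intros v w Hv.
  - split; [apply lifts_to_elem_htpy; exact He|].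
    (* Lift [p'] anyhow, push the lift forward and compare endpoints. *)
    intro Hq'. subst v'.
    destruct (lift_exists Hp) as [w0 [H0 _]].
    rewrite (lift_unique Hq' (lifts_to_elem_htpy He H0)). exact H0.
  - reflexivity.
  - symmetry. auto.
  - rewrite (IH1 v w Hv). auto.
Qed.

Lemma locally_bijective_vertex_injective :
  connected X -> simply_connected X' -> injective_map fV.
Proof.
  intros [_ hX] [_ hX'] v1 v2 E.
  destruct (hX v1 v2) as [p Hp].
  assert (Hloop : edge_path X' (fV v1) (fV v1) (map_steps fE p)).
  { rewrite E at 2. apply (edge_path_map hf). exact Hp. }
  apply lifts_to_nil.
  apply (lifts_to_htpy (hX' _ _ Hloop) v2 (eq_refl (fV v1))).
  exists p. auto.
Qed.

Lemma locally_bijective_vertex_surjective :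
  inhabited (sV X) -> connected X' -> forall v', exists v, fV v = v'.
Proof.
  intros [v0] [_ hX'] v'.
  destruct (hX' (fV v0) v') as [p' Hp'].
  destruct (lift_exists Hp') as [w [_ Hw]]. eauto.
Qed.

Lemma locally_bijective_isomorphism :
  connected X -> simply_connected X' -> is_isomorphism fV fE.
Proof.
  intros hX hX'.
  assert (injV := locally_bijective_vertex_injective hX hX').
  assert (surV := locally_bijective_vertex_surjective (proj1 hX) (proj1 hX')).
  apply bijective_morphism_isomorphism; auto.
  - intros a b E. apply (proj1 (hloc true (si X a))); auto.
    apply injV. cbn. rewrite <- !(proj1 hf), E. reflexivity.
  - intro a'. destruct (surV (si X' a')) as [v Hv].
    destruct (proj2 (hloc true v) a' (eq_sym Hv)) as [a [_ Ha]]. eauto.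
Qed.

End PathLifting.

Section Actions.
Context {G : Grp} {X : scwol}.
Variable A : action G X.

Lemma act_si g a : si X (actE A g a) = actV A g (si X a).
Proof. exact (proj1 (act_morph A g) a). Qed.

Lemma act_st g a : st X (actE A g a) = actV A g (st X a).
Proof. exact (proj1 (proj2 (act_morph A g)) a). Qed.

Lemma actVK g v : actV A (ginv g) (actV A g v) = v.
Proof. rewrite <- actVM, gmulV, actV1. reflexivity. Qed.

Lemma actEK g a : actE A (ginv g) (actE A g a) = a.
Proof. rewrite <- actEM, gmulV, actE1. reflexivity. Qed.

Lemma actEKV g a : actE A g (actE A (ginv g) a) = a.
Proof. rewrite <- actEM, gmulrV, actE1. reflexivity. Qed.

Lemma actE_inj g a b : actE A g a = actE A g b -> a = b.
Proof. intro H. rewrite <- (actEK g a), H, actEK. reflexivity. Qed.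

Lemma orbit_edge_eq g a b : actE A g a = b -> si X a = si X b -> a = b.
Proof.
  intros <- H. rewrite act_si in H. symmetry. apply act_stab. symmetry. exact H.
Qed.

End Actions.

Section Quotient.
Context {G : Grp} {X Y : scwol} {A : action G X}.
Context {pV : sV X -> sV Y} {pE : sE X -> sE Y}.
Hypothesis hY : is_quotient A pV pE.

Lemma quot_si a : si Y (pE a) = pV (si X a).
Proof. exact (proj1 (proj1 hY) a). Qed.

Lemma quot_st a : st Y (pE a) = pV (st X a).
Proof. exact (proj1 (proj2 (proj1 hY)) a). Qed.

Lemma quot_edge_surj e : exists a, pE a = e.
Proof. exact (proj1 (proj2 (proj2 hY)) e). Qed.

Lemma quot_edge_orbit a b : pE a = pE b -> exists g, actE A g a = b.
Proof. apply (proj2 (proj2 (proj2 (proj2 hY)))). Qed.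

Lemma quot_vertex_orbit v w : pV v = pV w -> exists g, actV A g v = w.
Proof. apply (proj1 (proj2 (proj2 (proj2 hY)))). Qed.

Lemma quot_actE g a : pE (actE A g a) = pE a.
Proof. symmetry. apply (proj2 (proj2 (proj2 (proj2 hY)))). eauto. Qed.

Lemma quotient_connected : connected X -> connected Y.
Proof.
  intros [[v0] hX]. split; [exact (inhabits (pV v0))|].
  intros v w.
  destruct (proj1 (proj2 hY) v) as [x <-], (proj1 (proj2 hY) w) as [y <-].
  destruct (hX x y) as [p Hp].
  exists (map_steps pE p). exact (edge_path_map (proj1 hY) Hp).
Qed.

End Quotient.

Section CosetEdges.
Context {G : Grp} {X Y : scwol} {A : action G X}.
Context {pV : sV X -> sV Y} {pE : sE X -> sE Y}.
Variable C : choiceC A pV pE.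

(* For t(a) = σ and g ∈ G_σ, [coset_edge a g] ends at σ̄ and depends only on
   the coset g ψ_a(G_{i(a)}); this identifies the disjoint union of the
   G_σ/ψ_a(G_{i(a)}) with the set of edges of X ending at σ̄. *)
Definition coset_edge (a : sE Y) (g : G) : sE X :=
  actE A (gmul g (ch C a)) (cbarE C a).

Lemma cbarE_st a : st X (cbarE C a) = actV A (ginv (ch C a)) (cbarV C (st Y a)).
Proof. rewrite <- (ch_t C a), actVK. reflexivity. Qed.

Lemma coset_edge_st a g :
  locC C (st Y a) g -> st X (coset_edge a g) = cbarV C (st Y a).
Proof. intro H. unfold coset_edge. rewrite act_st, actVM, (ch_t C a). exact H. Qed.

Lemma coset_edge_proj (hY : is_quotient A pV pE) a g : pE (coset_edge a g) = a.
Proof. unfold coset_edge. rewrite (quot_actE hY). apply cbarE_lift. Qed.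

Lemma coset_edge_psi a g h :
  locC C (si Y a) h -> coset_edge a (gmul g (psiC C a h)) = coset_edge a g.
Proof.
  unfold locC, coset_edge, psiC. intro H.
  replace (gmul (gmul g (gmul (gmul (ch C a) h) (ginv (ch C a)))) (ch C a))
    with (gmul (gmul g (ch C a)) h) by (group_simpl; reflexivity).
  rewrite actEM, (act_stab A h (cbarE C a)); [reflexivity|].
  rewrite cbarE_i. exact H.
Qed.

Lemma coset_edge_inj a g1 g2 :
  coset_edge a g1 = coset_edge a g2 ->
  exists h, locC C (si Y a) h /\ gmul g1 (psiC C a h) = g2.
Proof.
  unfold locC, coset_edge, psiC. intro H.
  exists (gmul (ginv (gmul g1 (ch C a))) (gmul g2 (ch C a))). split.
  - rewrite <- cbarE_i, <- act_si, actEM, <- H, actEK. reflexivity.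
  - group_simpl. reflexivity.
Qed.

Lemma coset_edge_surj (hY : is_quotient A pV pE) s e :
  st X e = cbarV C s ->
  exists g, locC C s g /\ coset_edge (pE e) g = e /\ st Y (pE e) = s.
Proof.
  intro He.
  assert (Hs : st Y (pE e) = s) by (rewrite (quot_st hY), He; apply cbarV_lift).
  destruct (quot_edge_orbit hY (cbarE_lift C (pE e))) as [g0 Hg0].
  exists (gmul g0 (ginv (ch C (pE e)))). split; [|split]; auto.
  - unfold locC.
    rewrite actVM, <- Hs, <- cbarE_st, <- act_st, Hg0, He, Hs. reflexivity.
  - unfold coset_edge. rewrite <- gmulA, gmulV, gmulr1. exact Hg0.
Qed.

End CosetEdges.

Definition covering_injective {Y Y' : scwol} (lV : sV Y -> sV Y') (lE : sE Y -> sE Y')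
  {G G' : Grp} (loc : sV Y -> G -> Prop) (psi : sE Y -> G -> G)
  (loc' : sV Y' -> G' -> Prop) (psi' : sE Y' -> G' -> G')
  (phiV : sV Y -> G -> G') (phiE : sE Y -> G') : Prop :=
  forall (a' : sE Y') (s : sV Y), st Y' a' = lV s ->
  forall a1 a2 g1 g2, lE a1 = a' -> lE a2 = a' -> st Y a1 = s -> st Y a2 = s ->
    loc s g1 -> loc s g2 ->
    (exists h', loc' (si Y' a') h' /\
       gmul (gmul (phiV s g1) (phiE a1)) (psi' a' h') = gmul (phiV s g2) (phiE a2)) ->
    a1 = a2 /\ exists h, loc (si Y a1) h /\ gmul g1 (psi a1 h) = g2.

Definition covering_surjective {Y Y' : scwol} (lV : sV Y -> sV Y') (lE : sE Y -> sE Y')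
  {G G' : Grp} (loc : sV Y -> G -> Prop) (loc' : sV Y' -> G' -> Prop)
  (psi' : sE Y' -> G' -> G') (phiV : sV Y -> G -> G') (phiE : sE Y -> G') : Prop :=
  forall (a' : sE Y') (s : sV Y), st Y' a' = lV s ->
  forall g', loc' (lV s) g' ->
    exists a g h', lE a = a' /\ st Y a = s /\ loc s g /\ loc' (si Y' a') h' /\
      gmul (gmul (phiV s g) (phiE a)) (psi' a' h') = g'.

Lemma is_covering_iff {Y Y' : scwol} (lV : sV Y -> sV Y') (lE : sE Y -> sE Y')
  {G G' : Grp} (loc : sV Y -> G -> Prop) (psi : sE Y -> G -> G)
  (loc' : sV Y' -> G' -> Prop) (psi' : sE Y' -> G' -> G')
  (phiV : sV Y -> G -> G') (phiE : sE Y -> G') :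
  is_covering lV lE loc psi loc' psi' phiV phiE <->
  nondegenerate lV lE /\ connected Y' /\
  (forall s g1 g2, loc s g1 -> loc s g2 -> phiV s g1 = phiV s g2 -> g1 = g2) /\
  (covering_injective lV lE loc psi loc' psi' phiV phiE /\
   covering_surjective lV lE loc loc' psi' phiV phiE).
Proof.
  unfold is_covering, covering_injective, covering_surjective. split.
  - intros [H1 [H2 [H3 H4]]].
    split; [|split; [|split; [|split]]]; auto; intros a' s Hs; apply (H4 a' s Hs).
  - intros [H1 [H2 [H3 [H4 H5]]]].
    split; [|split; [|split]]; auto.
    intros a' s Hs. split; [exact (H4 a' s Hs) | exact (H5 a' s Hs)].
Qed.

Section InducedMorphism.
Context {G G' : Grp} {X X' Y Y' : scwol} {A : action G X} {A' : action G' X'}.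
Context {pV : sV X -> sV Y} {pE : sE X -> sE Y}.
Context {pV' : sV X' -> sV Y'} {pE' : sE X' -> sE Y'}.
Context {Lam : G -> G'} {LV : sV X -> sV X'} {LE : sE X -> sE X'}.
Context {lV : sV Y -> sV Y'} {lE : sE Y -> sE Y'}.
Context {C : choiceC A pV pE} {C' : choiceC A' pV' pE'} {k : sV Y -> G'}.
Hypotheses (hY : is_quotient A pV pE) (hY' : is_quotient A' pV' pE').
Hypotheses (hLam : group_hom Lam) (hL : is_morphism LV LE).
Hypotheses (hLeqV : forall g v, LV (actV A g v) = actV A' (Lam g) (LV v))
  (hLeqE : forall g a, LE (actE A g a) = actE A' (Lam g) (LE a)).
Hypotheses (hlV : forall v, lV (pV v) = pV' (LV v))
  (hlE : forall a, lE (pE a) = pE' (LE a)).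
Hypothesis hN : choiceN C C' LV lV k.

Lemma star_bijective_act d g v :
  star_bijective d LV LE v -> star_bijective d LV LE (actV A g v).
Proof.
  intros [Hinj Hsurj]. split.
  - intros a b Ha Hb Hab. apply (actE_inj (A := A) (g := ginv g)). apply Hinj.
    + rewrite (step_src_map (act_morph A _)), Ha, actVK. reflexivity.
    + rewrite (step_src_map (act_morph A _)), Hb, actVK. reflexivity.
    + rewrite !hLeqE, Hab. reflexivity.
  - intros a' Ha'.
    destruct (Hsurj (actE A' (ginv (Lam g)) a')) as [a [Ha HLa]].
    { rewrite (step_src_map (act_morph A' _)), Ha', hLeqV, actVK. reflexivity. }
    exists (actE A g a). split.
    + rewrite (step_src_map (act_morph A g)), Ha. reflexivity.
    + rewrite hLeqE, HLa, actEKV. reflexivity.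
Qed.

Lemma star_bijective_lift_iff d :
  (forall s, star_bijective d LV LE (cbarV C s)) <-> forall v, star_bijective d LV LE v.
Proof.
  split; [|auto].
  intros H v. destruct (quot_vertex_orbit hY (cbarV_lift C (pV v))) as [g <-].
  apply star_bijective_act, H.
Qed.

Lemma induced_si e : si Y' (lE e) = lV (si Y e).
Proof.
  destruct (quot_edge_surj hY e) as [a <-].
  rewrite hlE, (quot_si hY'), (proj1 hL), <- hlV, (quot_si hY). reflexivity.
Qed.

Lemma induced_st e : st Y' (lE e) = lV (st Y e).
Proof.
  destruct (quot_edge_surj hY e) as [a <-].
  rewrite hlE, (quot_st hY'), (proj1 (proj2 hL)), <- hlV, (quot_st hY). reflexivity.
Qed.

Lemma lift_edge_transport a : actE A' (k (si Y a)) (LE (cbarE C a)) = cbarE C' (lE a).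
Proof.
  assert (Hp : pE' (actE A' (k (si Y a)) (LE (cbarE C a))) = pE' (cbarE C' (lE a))).
  { rewrite (quot_actE hY'), <- hlE, !cbarE_lift. reflexivity. }
  destruct (quot_edge_orbit hY' Hp) as [g Hg].
  apply (orbit_edge_eq Hg).
  rewrite act_si, (proj1 hL), cbarE_i, hN, cbarE_i, induced_si. reflexivity.
Qed.

(* The formulas defining λ_σ and λ(a) are exactly those making L carry the
   coset edge of (a, g) to the coset edge of (l(a), λ_σ(g) λ(a)), up to k_σ. *)
Lemma coset_edge_transport a g :
  actE A' (k (st Y a)) (LE (coset_edge C a g)) =
  coset_edge C' (lE a) (gmul (lambdaV Lam k (st Y a) g) (lambdaE C C' Lam lE k a)).
Proof.
  unfold coset_edge, lambdaV, lambdaE.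
  rewrite <- (lift_edge_transport a), hLeqE, <- !actEM. f_equal.
  rewrite !hLam. group_simpl. reflexivity.
Qed.

Lemma star_injective_out_iff :
  (forall s, star_injective true lE s) <-> forall s, star_injective true LE (cbarV C s).
Proof.
  split.
  - intros Hl s a b Ha Hb Hab. cbn in Ha, Hb.
    assert (Hp : pE a = pE b).
    { apply (Hl s); cbn.
      - rewrite (quot_si hY), Ha. apply cbarV_lift.
      - rewrite (quot_si hY), Hb. apply cbarV_lift.
      - rewrite !hlE, Hab. reflexivity. }
    destruct (quot_edge_orbit hY Hp) as [g Hg].
    apply (orbit_edge_eq Hg). congruence.
  - intros HL s e1 e2 H1 H2 H12. cbn in H1, H2.
    rewrite <- (cbarE_lift C e1), <- (cbarE_lift C e2). f_equal.
    assert (Hp : pE' (LE (cbarE C e1)) = pE' (LE (cbarE C e2))).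
    { rewrite <- !hlE, !cbarE_lift. exact H12. }
    destruct (quot_edge_orbit hY' Hp) as [g Hg].
    apply (HL s); cbn; [rewrite cbarE_i, H1 | rewrite cbarE_i, H2 |]; auto.
    apply (orbit_edge_eq Hg). rewrite !(proj1 hL), !cbarE_i, H1, H2. reflexivity.
Qed.

Lemma star_surjective_out_iff :
  (forall s, star_surjective true lV lE s) <->
  forall s, star_surjective true LV LE (cbarV C s).
Proof.
  split.
  - intros Hl s a' Ha'. cbn in Ha'.
    destruct (Hl s (pE' a')) as [e [He1 He2]].
    { cbn. rewrite (quot_si hY'), Ha', <- hlV, cbarV_lift. reflexivity. }
    cbn in He1. exists (cbarE C e). cbn. split; [rewrite cbarE_i, He1; reflexivity|].
    assert (Hp : pE' (LE (cbarE C e)) = pE' a').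
    { rewrite <- hlE, cbarE_lift. exact He2. }
    destruct (quot_edge_orbit hY' Hp) as [g Hg].
    apply (orbit_edge_eq Hg). rewrite Ha', (proj1 hL), cbarE_i, He1. reflexivity.
  - intros HL s e' He'. cbn in He'.
    destruct (quot_edge_surj hY' e') as [x <-].
    assert (Hp : pV' (si X' x) = pV' (LV (cbarV C s))).
    { rewrite <- (quot_si hY'), He', <- hlV, cbarV_lift. reflexivity. }
    destruct (quot_vertex_orbit hY' Hp) as [g Hg].
    destruct (HL s (actE A' g x)) as [a [Ha1 Ha2]]; [cbn; rewrite act_si; exact Hg|].
    cbn in Ha1. exists (pE a). cbn. split.
    + rewrite (quot_si hY), Ha1. apply cbarV_lift.
    + rewrite hlE, Ha2, (quot_actE hY'). reflexivity.
Qed.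

Lemma covering_injective_iff :
  covering_injective lV lE (locC C) (psiC C) (locC C') (psiC C')
    (lambdaV Lam k) (lambdaE C C' Lam lE k) <->
  forall s, star_injective false LE (cbarV C s).
Proof.
  split.
  - intros Hcov s e1 e2 H1 H2 H12. cbn in H1, H2.
    destruct (coset_edge_surj hY H1) as [g1 [Hg1 [Hge1 Hs1]]].
    destruct (coset_edge_surj hY H2) as [g2 [Hg2 [Hge2 Hs2]]].
    assert (Hl : lE (pE e2) = lE (pE e1)) by (rewrite !hlE, H12; reflexivity).
    assert (Hst : st Y' (lE (pE e1)) = lV s) by (rewrite induced_st, Hs1; reflexivity).
    pose proof (coset_edge_transport (pE e1) g1) as K1.
    pose proof (coset_edge_transport (pE e2) g2) as K2.
    rewrite Hge1, Hs1 in K1. rewrite Hge2, Hs2, Hl, <- H12, K1 in K2.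
    destruct (coset_edge_inj K2) as [h' Hh'].
    destruct (Hcov _ s Hst (pE e1) (pE e2) g1 g2) as [Ha [h [Hh Hgh]]]; eauto.
    rewrite <- Hge1, <- Hge2, <- Ha, <- Hgh, coset_edge_psi; auto.
  - intros HL a' s Hs a1 a2 g1 g2 Ha1 Ha2 Hs1 Hs2 Hg1 Hg2 [h' [Hh' Heq]].
    subst a' s.
    pose proof (coset_edge_transport a1 g1) as K1.
    pose proof (coset_edge_transport a2 g2) as K2.
    rewrite Hs2, Ha2 in K2.
    assert (Hee : coset_edge C a1 g1 = coset_edge C a2 g2).
    { apply (HL (st Y a1)); cbn.
      - apply coset_edge_st, Hg1.
      - rewrite <- Hs2. apply coset_edge_st. rewrite Hs2. exact Hg2.
      - apply (actE_inj (A := A') (g := k (st Y a1))).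
        rewrite K1, K2, <- Heq, coset_edge_psi by exact Hh'. reflexivity. }
    assert (a1 = a2).
    { rewrite <- (coset_edge_proj C hY a1 g1), Hee. apply coset_edge_proj, hY. }
    subst a2. split; auto. apply coset_edge_inj. exact Hee.
Qed.

Lemma covering_surjective_iff :
  covering_surjective lV lE (locC C) (locC C') (psiC C')
    (lambdaV Lam k) (lambdaE C C' Lam lE k) <->
  forall s, star_surjective false LV LE (cbarV C s).
Proof.
  split.
  - intros Hcov s e' He'. cbn in He'.
    assert (Hf : st X' (actE A' (k s) e') = cbarV C' (lV s)).
    { rewrite act_st, He'. apply hN. }
    destruct (coset_edge_surj hY' Hf) as [g' [Hg' [Hge' Hs']]].
    set (a' := pE' (actE A' (k s) e')) in *.
    destruct (Hcov _ s Hs' g' Hg') as [a [g [h' [Ha [Has [Hg [Hh' Heq]]]]]]].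
    exists (coset_edge C a g). cbn. split.
    + rewrite coset_edge_st, Has; [reflexivity | rewrite Has; exact Hg].
    + apply (actE_inj (A := A') (g := k s)). rewrite <- Has at 1.
      rewrite coset_edge_transport, Has, Ha, <- Hge', <- Heq.
      symmetry. apply coset_edge_psi, Hh'.
  - intros HL a' s Hs g' Hg'.
    assert (Hst : st X' (actE A' (ginv (k s)) (coset_edge C' a' g')) = LV (cbarV C s)).
    { rewrite act_st, coset_edge_st, Hs, <- hN, actVK; [reflexivity | rewrite Hs; exact Hg']. }
    destruct (HL s _ Hst) as [e [He1 He2]]. cbn in He1.
    destruct (coset_edge_surj hY He1) as [g [Hg [Hge Hse]]].
    assert (Hla : lE (pE e) = a').
    { rewrite hlE, He2, (quot_actE hY'). apply (coset_edge_proj C' hY'). }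
    pose proof (coset_edge_transport (pE e) g) as K.
    rewrite Hge, Hse, Hla, He2, actEKV in K.
    destruct (coset_edge_inj (eq_sym K)) as [h' [Hh' Heq]].
    exists (pE e), g, h'. repeat split; auto.
Qed.

Lemma nondegenerate_induced_iff :
  nondegenerate lV lE <-> forall v, star_bijective true LV LE v.
Proof.
  rewrite <- star_bijective_lift_iff.
  split; intros H s; split.
  - apply star_injective_out_iff. intro t. exact (proj1 (H t)).
  - apply star_surjective_out_iff. intro t. exact (proj2 (H t)).
  - apply star_injective_out_iff. intro t. apply H.
  - apply star_surjective_out_iff. intro t. apply H.
Qed.

Lemma covering_condition_iff :
  covering_injective lV lE (locC C) (psiC C) (locC C') (psiC C')
    (lambdaV Lam k) (lambdaE C C' Lam lE k) /\
  covering_surjective lV lE (locC C) (locC C') (psiC C')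
    (lambdaV Lam k) (lambdaE C C' Lam lE k) <->
  forall v, star_bijective false LV LE v.
Proof.
  rewrite <- star_bijective_lift_iff, covering_injective_iff, covering_surjective_iff.
  split; [intros [Hi Hs] s; split; auto | intro H; split; intro s; apply H].
Qed.

Lemma injective_of_lambdaV_injective :
  (forall s g1 g2, locC C s g1 -> locC C s g2 ->
     lambdaV Lam k s g1 = lambdaV Lam k s g2 -> g1 = g2) ->
  injective_map LV -> inhabited (sV X) -> injective_map Lam.
Proof.
  intros Hloc HLV [v0] x y Hxy.
  set (c := cbarV C (pV v0)).
  assert (Hc : actV A x c = actV A y c) by (apply HLV; rewrite !hLeqV, Hxy; reflexivity).
  assert (Hz : gmul (ginv y) x = gone).
  { apply (Hloc (pV v0)).
    - unfold locC. fold c. rewrite actVM, Hc, actVK. reflexivity.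
    - apply actV1.
    - unfold lambdaV. rewrite hLam, (hom_inv hLam), Hxy, gmulV, (hom_one hLam).
      reflexivity. }
  rewrite <- (mulVKg y x), Hz, gmulr1. reflexivity.
Qed.

End InducedMorphism.

Lemma lambdaV_injective {G G' : Grp} {Y : scwol} (Lam : G -> G') (k : sV Y -> G') s :
  injective_map Lam -> injective_map (lambdaV Lam k s).
Proof.
  intros HLam g1 g2 E. apply HLam.
  apply mulg_cancel_l with (x := k s), mulg_cancel_r with (x := ginv (k s)). exact E.
Qed.

Theorem mainTheorem9
  (G G' : Grp) (X X' Y Y' : scwol)
  (A : action G X) (A' : action G' X')
  (hX : simply_connected X) (hX' : simply_connected X')
  (pV : sV X -> sV Y) (pE : sE X -> sE Y)
  (hY : is_quotient A pV pE)
  (pV' : sV X' -> sV Y') (pE' : sE X' -> sE Y')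
  (hY' : is_quotient A' pV' pE')
  (Lam : G -> G') (hLam : group_hom Lam)
  (LV : sV X -> sV X') (LE : sE X -> sE X')
  (hL : is_morphism LV LE)
  (hLeqV : forall g v, LV (actV A g v) = actV A' (Lam g) (LV v))
  (hLeqE : forall g a, LE (actE A g a) = actE A' (Lam g) (LE a))
  (lV : sV Y -> sV Y') (lE : sE Y -> sE Y')
  (hlV : forall v, lV (pV v) = pV' (LV v))
  (hlE : forall a, lE (pE a) = pE' (LE a))
  (C : choiceC A pV pE) (C' : choiceC A' pV' pE')
  (k : sV Y -> G') (hN : choiceN C C' LV lV k) :
  is_covering lV lE (locC C) (psiC C) (locC C') (psiC C')
    (lambdaV Lam k) (lambdaE C C' Lam lE k)
  <-> (injective_map Lam /\ is_isomorphism LV LE).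
Proof.
  rewrite is_covering_iff, (nondegenerate_induced_iff (C := C) hY hY' hL hLeqV hLeqE hlV hlE),
    (covering_condition_iff hY hY' hLam hL hLeqV hLeqE hlV hlE hN).
  split.
  - intros [Hout [_ [Hloc Hin]]].
    assert (Hiso : is_isomorphism LV LE).
    { apply (locally_bijective_isomorphism hL); [intros [|]; auto | apply hX | exact hX']. }
    split; [|exact Hiso].
    apply (injective_of_lambdaV_injective hLam hLeqV Hloc);
      [exact (isomorphism_vertex_injective Hiso) | apply hX].
  - intros [HLam Hiso].
    pose proof (isomorphism_locally_bijective Hiso) as Hlb.
    split; [|split; [|split]]; auto.
    + exact (quotient_connected hY' (proj1 hX')).
    + intros s g1 g2 _ _. apply lambdaV_injective, HLam.
Qed.
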